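(* Let $\|\cdot\|$ be a norm on $\mathbb{R}^{m\times d}$ with dual norm $\|U\|_\star=\sup_{\|D\|\le1}\langle U,D\rangle_F$, and let $C>0$ be a constant such that $\|\Delta\|_{1\to2}^2\le C\|\Delta\|^2$ for all $\Delta\in\mathbb{R}^{m\times d}$ (one may take $C=1$ when $\|\cdot\|=\|\cdot\|_{1\to2}$). Let $X\in\mathbb{R}^{m\times n}$ and $D\in\mathbb{R}^{m\times d}$. For every $\epsilon>0$ the set $\mathfrak{A}_\epsilon(X,D)$ is non-empty, and for every $D'\in\mathbb{R}^{m\times d}$, $$F_X(D')\le F_X(D)+L_X(D)\,\|D'-D\|+C_X(D)\,\|D'-D\|^2,$$ where $$L_X(D)=\inf_{\epsilon>0}\sup_{A\in\mathfrak{A}_\epsilon(X,D)}\tfrac1n\|(X-DA)A^\top\|_\star,\qquad C_X(D)=\inf_{\epsilon>0}\sup_{A\in\mathfrak{A}_\epsilon(X,D)}\tfrac{C}{2n}\sum_{i=1}^n\|\alpha_i\|_1^2$$ (these quantities lie in $[0,+\infty]$; the inequality is trivial if one of them is infinite and $D'\neq D$).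
   Context: A penalty is a function $g:\mathbb{R}^d\to\mathbb{R}\cup\{+\infty\}$ with $g\ge0$, not identically $+\infty$. For $x\in\mathbb{R}^m$, $D\in\mathbb{R}^{m\times d}$, $\alpha\in\mathbb{R}^d$: $\mathcal{L}_x(D,\alpha)=\tfrac12\|x-D\alpha\|_2^2+g(\alpha)$, $f_x(D)=\inf_\alpha\mathcal{L}_x(D,\alpha)$. For $X=[x_1,\dots,x_n]$, $F_X(D)=\frac1n\sum_i f_{x_i}(D)$. $\|\Delta\|_{1\to2}=\max_j\|\delta_j\|_2$ for $\Delta=[\delta_1,\dots,\delta_d]$. For $\epsilon>0$, $\mathfrak{A}_\epsilon(X,D)=\{A=[\alpha_1,\dots,\alpha_n]\in\mathbb{R}^{d\times n}:\ \mathcal{L}_{x_i}(D,\alpha_i)\le f_{x_i}(D)+\epsilon\ \text{for all } i\}$. $\langle\cdot,\cdot\rangle_F$ is the Frobenius inner product. *)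

From mathcomp Require Import ssreflect ssrfun ssrbool eqtype ssrnat seq fintype bigop.
From Stdlib Require Import Reals ClassicalEpsilon.
Set Implicit Arguments.
Unset Strict Implicit.
Unset Printing Implicit Defensive.
Local Open Scope R_scope.

Inductive Rbar : Type := Finite (r : R) | p_infty | m_infty.

Definition Rbar_le (x y : Rbar) : Prop :=
  match x, y with
  | m_infty, _ => True
  | _, p_infty => True
  | Finite a, Finite b => a <= b
  | _, _ => False
  end.

Definition Rbar_opp (x : Rbar) : Rbar :=
  match x with Finite r => Finite (- r) | p_infty => m_infty | m_infty => p_infty end.

(* addition; only used on values in (-oo, +oo], where it is the usual one *)
Definition Rbar_plus (x y : Rbar) : Rbar :=
  match x, y with
  | Finite a, Finite b => Finite (a + b)
  | p_infty, _ | _, p_infty => p_infty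
  | _, _ => m_infty
  end.

(* multiplication of an extended real by a real scalar c >= 0,
   with the convention 0 * (+oo) = 0 *)
Definition Rbar_scal (c : R) (x : Rbar) : Rbar :=
  if Req_EM_T c 0 then Finite 0 else
  match x with Finite r => Finite (c * r) | p_infty => p_infty | m_infty => m_infty end.

Definition Rbar_sup (E : Rbar -> Prop) : Rbar :=
  match excluded_middle_informative (E p_infty) with
  | left _ => p_infty
  | right _ =>
    match excluded_middle_informative (exists r, E (Finite r)) with
    | right _ => m_infty
    | left ne =>
      match excluded_middle_informative (bound (fun r => E (Finite r))) with
      | left b => Finite (proj1_sig (completeness (fun r => E (Finite r)) b ne))
      | right _ => p_infty
      end
    end
  end.

Definition Rbar_inf (E : Rbar -> Prop) : Rbar :=
  Rbar_opp (Rbar_sup (fun x => E (Rbar_opp x))).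

Definition vec (k : nat) := 'I_k -> R.
Definition mat (k l : nat) := 'I_k -> 'I_l -> R.

Definition sumR (k : nat) (f : 'I_k -> R) : R := \big[Rplus/0]_(i < k) f i.

Definition col (k l : nat) (j : 'I_l) (M : mat k l) : vec k := fun i => M i j.
Definition mat_sub (k l : nat) (A B : mat k l) : mat k l := fun i j => A i j - B i j.
Definition mat_add (k l : nat) (A B : mat k l) : mat k l := fun i j => A i j + B i j.
Definition mat_scale (k l : nat) (c : R) (A : mat k l) : mat k l := fun i j => c * A i j.
Definition mat_mul (k l p : nat) (A : mat k l) (B : mat l p) : mat k p :=
  fun i j => sumR (fun t => A i t * B t j).
Definition trmx (k l : nat) (A : mat k l) : mat l k := fun j i => A i j.
Definition mulv (k l : nat) (D : mat k l) (a : vec l) : vec k :=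
  fun i => sumR (fun j => D i j * a j).
Definition vsub (k : nat) (u v : vec k) : vec k := fun i => u i - v i.

Definition norm2sq (k : nat) (v : vec k) : R := sumR (fun i => v i ^ 2).
Definition norm2 (k : nat) (v : vec k) : R := sqrt (norm2sq v).
Definition norm1 (k : nat) (v : vec k) : R := sumR (fun i => Rabs (v i)).

Definition frob (k l : nat) (U V : mat k l) : R :=
  sumR (fun i => sumR (fun j => U i j * V i j)).

(* ||Delta||_{1->2} = max_j ||delta_j||_2 (max over columns; 0 if l = 0) *)
Definition norm_1to2 (k l : nat) (Delta : mat k l) : R :=
  \big[Rmax/0]_(j < l) norm2 (col j Delta).

Definition is_norm (k l : nat) (N : mat k l -> R) : Prop :=
  (forall A, N A = 0 -> forall i j, A i j = 0) /\
  (forall c A, N (mat_scale c A) = Rabs c * N A) /\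
  (forall A B, N (mat_add A B) <= N A + N B).

Definition dual_norm (k l : nat) (N : mat k l -> R) (U : mat k l) : Rbar :=
  Rbar_sup (fun v => exists D, N D <= 1 /\ v = Finite (frob U D)).

Definition is_penalty (d : nat) (g : vec d -> Rbar) : Prop :=
  (forall a, Rbar_le (Finite 0) (g a)) /\ (exists a, g a <> p_infty).

Definition Lx (m d : nat) (g : vec d -> Rbar) (x : vec m) (D : mat m d) (a : vec d) : Rbar :=
  Rbar_plus (Finite (/2 * norm2sq (vsub x (mulv D a)))) (g a).

Definition fx (m d : nat) (g : vec d -> Rbar) (x : vec m) (D : mat m d) : Rbar :=
  Rbar_inf (fun v => exists a, v = Lx g x D a).

Definition FX (m d n : nat) (g : vec d -> Rbar) (X : mat m n) (D : mat m d) : Rbar :=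
  Rbar_scal (/ INR n) (\big[Rbar_plus/Finite 0]_(i < n) fx g (col i X) D).

Definition in_Aeps (m d n : nat) (g : vec d -> Rbar) (eps : R)
    (X : mat m n) (D : mat m d) (A : mat d n) : Prop :=
  forall i : 'I_n,
    Rbar_le (Lx g (col i X) D (col i A)) (Rbar_plus (fx g (col i X) D) (Finite eps)).

Definition LX (m d n : nat) (g : vec d -> Rbar) (N : mat m d -> R)
    (X : mat m n) (D : mat m d) : Rbar :=
  Rbar_inf (fun v => exists eps, 0 < eps /\
    v = Rbar_sup (fun w => exists A, in_Aeps g eps X D A /\
          w = Rbar_scal (/ INR n)
                (dual_norm N (mat_mul (mat_sub X (mat_mul D A)) (trmx A))))).

Definition CX (m d n : nat) (g : vec d -> Rbar) (C : R)
    (X : mat m n) (D : mat m d) : Rbar :=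
  Rbar_inf (fun v => exists eps, 0 < eps /\
    v = Rbar_sup (fun w => exists A, in_Aeps g eps X D A /\
          w = Finite (C / (2 * INR n) * sumR (fun i => norm1 (col i A) ^ 2)))).

(* For eps > 0 each f_{x_i}(D) is a finite infimum, so eps-approximate
   minimisers exist and, by choice, form a code matrix A in A_eps(X, D).
   Fix such an A and D' = D + Delta.  Evaluating L_{x_i}(D', .) at alpha_i
   and expanding the square gives
     f_{x_i}(D') <= f_{x_i}(D) + eps - <x_i - D alpha_i, Delta alpha_i>
                    + 1/2 ||Delta alpha_i||_2^2,
   where ||Delta alpha||_2 <= ||alpha||_1 ||Delta||_{1->2} by a weighted
   Cauchy-Schwarz inequality.  Averaging over i, the cross terms form
   -(1/n) <(X - DA)A^T, Delta>_F, bounded through the dual norm by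
   ||Delta|| (1/n) ||(X - DA)A^T||_*, and the quadratic terms are at most
   ||Delta||^2 C/(2n) sum_i ||alpha_i||_1^2.  Since A_eps shrinks as eps
   decreases, a single A nearly attains both infima L_X(D) and C_X(D);
   letting eps -> 0 gives the theorem. *)

Set Warnings "-notation-overridden,-redundant-canonical-projection".
From HB Require Import structures.
From Pilot Require Import Defs.
From mathcomp Require Import ssreflect ssrfun ssrbool eqtype ssrnat seq fintype bigop.
From Stdlib Require Import Reals Lra Psatz Classical ClassicalEpsilon FunctionalExtensionality.
Set Implicit Arguments. Unset Strict Implicit.
Local Open Scope R_scope.

(* The name [Finite] is also a MathComp module; [RF] refers to the
   constructor of finite extended reals. *)
Notation RF := Defs.Finite.

(* Real addition is a commutative monoid law, which gives access to the
   generic bigop theory (splitting, exchanging sums) for [sumR]. *)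
Lemma RplusA : associative Rplus. Proof. by move=> x y z; ring. Qed.
HB.instance Definition _ := Monoid.isComLaw.Build R 0 Rplus RplusA Rplus_comm Rplus_0_l.

Lemma sumR_ext k (f g : 'I_k -> R) : (forall i, f i = g i) -> sumR f = sumR g.
Proof. by move=> fg; apply: eq_bigr => i _; exact: fg. Qed.

Lemma sumR_add k (f g : 'I_k -> R) : sumR (fun i => f i + g i) = sumR f + sumR g.
Proof. by rewrite /sumR big_split. Qed.

Lemma sumR_scal k c (f : 'I_k -> R) : sumR (fun i => c * f i) = c * sumR f.
Proof.
rewrite /sumR; symmetry; apply: (big_morph (fun x => c * x)) => [x y|]; ring.
Qed.

Lemma sumR_opp k (f : 'I_k -> R) : sumR (fun i => - f i) = - sumR f.
Proof. by rewrite /sumR; symmetry; apply: (big_morph Ropp) => [x y|]; ring. Qed.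

Lemma sumR_const k c : sumR (fun _ : 'I_k => c) = INR k * c.
Proof.
rewrite /sumR big_const_ord; elim: k => [|k IH]; first by rewrite /=; ring.
by rewrite S_INR Rmult_plus_distr_r -IH /=; ring.
Qed.

Lemma sumR_le k (f g : 'I_k -> R) : (forall i, f i <= g i) -> sumR f <= sumR g.
Proof.
by move=> fg; apply: (big_ind2 (fun x y => x <= y)) => [|*|i _]; [lra|lra|exact: fg].
Qed.

Lemma sumR_ge0 k (f : 'I_k -> R) : (forall i, 0 <= f i) -> 0 <= sumR f.
Proof. by move=> f0; apply: (big_ind (fun x => 0 <= x)) => [|*|i _]; [lra|lra|exact: f0]. Qed.

Lemma sumR_swap k l (f : 'I_k -> 'I_l -> R) :
  sumR (fun i => sumR (fun j => f i j)) = sumR (fun j => sumR (fun i => f i j)).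
Proof. by rewrite /sumR exchange_big. Qed.

Lemma bigmax_ub k (F : 'I_k -> R) j : F j <= \big[Rmax/0]_(i < k) F i.
Proof.
have: j \in index_enum 'I_k by rewrite mem_index_enum.
elim: (index_enum 'I_k) => [|a r IH] //=.
rewrite in_cons big_cons => /orP [/eqP ->|/IH H]; first exact: Rmax_l.
exact: Rle_trans H (Rmax_r _ _).
Qed.

(* Weighted Cauchy-Schwarz: (sum a_j b_j)^2 <= (sum |a_j|) (sum |a_j| b_j^2).
   It follows from the nonnegativity of the double sum of
   |a_i||a_j|(b_i^2 + b_j^2) - 2 a_i b_i a_j b_j. *)
Lemma weighted_CS k (a b : 'I_k -> R) :
  sumR (fun j => a j * b j) ^ 2 <=
  sumR (fun j => Rabs (a j)) * sumR (fun j => Rabs (a j) * b j ^ 2).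
Proof.
set S := sumR _; set W := sumR _; set T := sumR _.
have pair_ge0 i j :
    0 <= Rabs (a i) * b i ^ 2 * Rabs (a j) + Rabs (a i) * (Rabs (a j) * b j ^ 2)
         + -2 * (a i * b i) * (a j * b j).
  (* With q = a_i a_j: |q|(b_i^2 + b_j^2) - 2 q b_i b_j
     = (|q| + q)/2 (b_i - b_j)^2 + (|q| - q)/2 (b_i + b_j)^2. *)
  have sum_ge0 : 0 <= Rabs (a i * a j) + a i * a j.
    by have := Rabs_Ropp (a i * a j); have := Rle_abs (- (a i * a j)); lra.
  have diff_ge0 : 0 <= Rabs (a i * a j) - a i * a j by have := Rle_abs (a i * a j); lra.
  have := Rmult_le_pos _ _ sum_ge0 (pow2_ge_0 (b i - b j)).
  have := Rmult_le_pos _ _ diff_ge0 (pow2_ge_0 (b i + b j)).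
  rewrite Rabs_mult; nra.
have double_sum :
    sumR (fun i => sumR (fun j => Rabs (a i) * b i ^ 2 * Rabs (a j)
        + Rabs (a i) * (Rabs (a j) * b j ^ 2) + -2 * (a i * b i) * (a j * b j)))
    = W * T + W * T + -2 * S * S.
  rewrite (sumR_ext (g := fun i => T * Rabs (a i) + W * (Rabs (a i) * b i ^ 2)
                                    + -2 * S * (a i * b i))).
    by rewrite !sumR_add !sumR_scal -/S -/W -/T; ring.
  by move=> i; rewrite !sumR_add !sumR_scal -/S -/W -/T; ring.
have := sumR_ge0 (fun i => sumR_ge0 (pair_ge0 i)); rewrite double_sum; lra.
Qed.

Lemma Rbar_le_trans x y z : Rbar_le x y -> Rbar_le y z -> Rbar_le x z.
Proof. by case: x; case: y; case: z => //= *; lra. Qed.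

Lemma Rbar_le_total x y : ~ Rbar_le x y -> Rbar_le y x.
Proof. by case: x; case: y => //= *; lra. Qed.

Lemma Rbar_oppK x : Rbar_opp (Rbar_opp x) = x.
Proof. by case: x => //= r; rewrite Ropp_involutive. Qed.

Lemma Rbar_le_opp x y : Rbar_le x y -> Rbar_le (Rbar_opp y) (Rbar_opp x).
Proof. by case: x; case: y => //= *; lra. Qed.

Lemma sup_ub (E : Rbar -> Prop) x : E x -> Rbar_le x (Rbar_sup E).
Proof.
move=> Ex; rewrite /Rbar_sup.
case: excluded_middle_informative => [_|noInf]; first by case: x Ex.
case: excluded_middle_informative => [ne|noFin]; last first.
  by case: x Ex => [r Er|/noInf|] //; case: noFin; exists r.
case: excluded_middle_informative => [bnd|_]; last by case: x Ex => [|/noInf|].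
case: (completeness _ bnd ne) => s [s_ub _] /=.
by case: x Ex => [r Er|/noInf|] //=; exact: s_ub.
Qed.

Lemma sup_lub (E : Rbar -> Prop) y :
  (forall x, E x -> Rbar_le x y) -> Rbar_le (Rbar_sup E) y.
Proof.
move=> ub; rewrite /Rbar_sup.
case: excluded_middle_informative => [Ep|_]; first exact: ub.
case: excluded_middle_informative => [[r Er] | _] //.
case: excluded_middle_informative => [bnd|unb].
- case: (completeness _ bnd (ex_intro _ r Er)) => s [_ s_lub] /=.
  case: y ub => [b| |] ub //; last exact: (ub _ Er).
  by apply: s_lub => r' Er'; exact: (ub _ Er').
- case: y ub => [b| |] ub //; last exact: (ub _ Er).
  by case: unb; exists b => r' Er'; exact: (ub _ Er').
Qed.

Lemma inf_lb (E : Rbar -> Prop) x : E x -> Rbar_le (Rbar_inf E) x.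
Proof.
move=> Ex; rewrite /Rbar_inf -{1}(Rbar_oppK x); apply: Rbar_le_opp.
by apply: sup_ub; rewrite Rbar_oppK.
Qed.

Lemma inf_glb (E : Rbar -> Prop) y :
  (forall x, E x -> Rbar_le y x) -> Rbar_le y (Rbar_inf E).
Proof.
move=> lb; rewrite /Rbar_inf -(Rbar_oppK y); apply: Rbar_le_opp.
by apply: sup_lub => v Ev; rewrite -(Rbar_oppK v); apply: Rbar_le_opp; exact: lb.
Qed.

Lemma inf_approx (E : Rbar -> Prop) M M' :
  Rbar_le (Rbar_inf E) (RF M) -> M < M' -> exists x, E x /\ Rbar_le x (RF M').
Proof.
move=> infM MM'; apply: NNPP => none.
have : Rbar_le (RF M') (Rbar_inf E).
  by apply: inf_glb => x Ex; apply: Rbar_le_total => xM; apply: none; exists x.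
by move/Rbar_le_trans/(_ infM) => /=; lra.
Qed.

Lemma scal_fin c r : Rbar_scal c (RF r) = RF (c * r).
Proof. by rewrite /Rbar_scal; case: Req_EM_T => //= ->; rewrite Rmult_0_l. Qed.

Lemma scal0 c x : c = 0 -> Rbar_scal c x = RF 0.
Proof. by rewrite /Rbar_scal; case: Req_EM_T. Qed.

Lemma scal_pinfty c : c <> 0 -> Rbar_scal c p_infty = p_infty.
Proof. by rewrite /Rbar_scal; case: Req_EM_T. Qed.

Lemma scal_ge0 c x : 0 <= c -> Rbar_le (RF 0) x -> Rbar_le (RF 0) (Rbar_scal c x).
Proof.
rewrite /Rbar_scal; case: Req_EM_T => /= _; first lra.
by case: x => //= r *; nra.
Qed.

Lemma norm_ge0 k l (N : mat k l -> R) A : is_norm N -> 0 <= N A.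
Proof.
move=> [_ [N_scale N_triangle]].
have cancel : mat_add A (mat_scale (-1) A) = mat_scale 0 A.
  by apply: functional_extensionality => i; apply: functional_extensionality => j;
     rewrite /mat_add /mat_scale; ring.
have := N_triangle A (mat_scale (-1) A).
by rewrite cancel !N_scale Rabs_R0 Rabs_Ropp Rabs_R1; lra.
Qed.

Lemma norm_sub_eq0 k l (N : mat k l -> R) (A B : mat k l) :
  is_norm N -> N (mat_sub A B) = 0 -> A = B.
Proof.
move=> [N_def _] N0; apply: functional_extensionality => i.
apply: functional_extensionality => j.
by have := N_def _ N0 i j; rewrite /mat_sub; lra.
Qed.

Lemma frob_scale k l (U V : mat k l) c : frob U (mat_scale c V) = c * frob U V.
Proof.
rewrite /frob -sumR_scal; apply: sumR_ext => i; rewrite -sumR_scal.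
by apply: sumR_ext => j; rewrite /mat_scale; ring.
Qed.

Lemma dual_ge0 k l (N : mat k l -> R) U : is_norm N -> Rbar_le (RF 0) (dual_norm N U).
Proof.
move=> [_ [N_scale _]]; apply: sup_ub; exists (mat_scale 0 U).
by rewrite N_scale Rabs_R0 frob_scale !Rmult_0_l; split; [lra|].
Qed.

(* Duality inequality -<U, V> <= ||V|| ||U||_*, tested on V / ||V||;
   stated with the scaled dual c ||U||_* that appears in L_X. *)
Lemma scaled_dual_bound k l (N : mat k l -> R) U V c b :
  is_norm N -> 0 <= c -> 0 < N V ->
  Rbar_le (Rbar_scal c (dual_norm N U)) (RF b) -> - (c * frob U V) <= N V * b.
Proof.
move=> N_norm c0 NV cdual.
have b0 : 0 <= b.
  by have := Rbar_le_trans (scal_ge0 c0 (dual_ge0 U N_norm)) cdual.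
have dual_test : Rbar_le (RF (- / N V * frob U V)) (dual_norm N U).
  apply: sup_ub; exists (mat_scale (- / N V) V); rewrite frob_scale; split => //.
  case: N_norm => _ [-> _]; rewrite Rabs_Ropp Rabs_pos_eq.
    by rewrite Rinv_l; lra.
  by apply: Rlt_le; apply: Rinv_0_lt_compat.
have test_bound : - frob U V <= N V * (- / N V * frob U V).
  by right; field; lra.
have [-> | cn0] := Req_dec c 0; first nra.
move: cdual dual_test; case: (dual_norm N U) => [du| |]; rewrite ?scal_fin ?scal_pinfty //=.
move=> cdu dudu.
have : N V * (- / N V * frob U V) <= N V * du by apply: Rmult_le_compat_l; lra.
nra.
Qed.

Lemma norm2sq_ge0 k (v : vec k) : 0 <= norm2sq v.
Proof. by apply: sumR_ge0 => i; exact: pow2_ge_0. Qed.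

Lemma col_norm2sq_le k l (Delta : mat k l) j : norm2sq (col j Delta) <= norm_1to2 Delta ^ 2.
Proof.
have col_le : norm2 (col j Delta) <= norm_1to2 Delta.
  exact: (bigmax_ub (fun j => norm2 (col j Delta))).
rewrite -(sqrt_sqrt (norm2sq (col j Delta))); last exact: norm2sq_ge0.
by have := sqrt_pos (norm2sq (col j Delta)); rewrite /norm2 in col_le; nra.
Qed.

Lemma mulv_norm2sq_le k l (Delta : mat k l) (a : vec l) :
  norm2sq (mulv Delta a) <= norm1 a ^ 2 * norm_1to2 Delta ^ 2.
Proof.
set W := norm1 a; set M := norm_1to2 Delta.
have W0 : 0 <= W by apply: sumR_ge0 => j; exact: Rabs_pos.
have rowwise : norm2sq (mulv Delta a)
    <= sumR (fun i => W * sumR (fun j => Rabs (a j) * Delta i j ^ 2)).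
  apply: sumR_le => i; rewrite /mulv.
  rewrite (sumR_ext (g := fun j => a j * Delta i j)) => [|j]; last ring.
  exact: weighted_CS.
have colwise : sumR (fun j => Rabs (a j) * norm2sq (col j Delta))
    <= sumR (fun j => M ^ 2 * Rabs (a j)).
  apply: sumR_le => j; have := col_norm2sq_le Delta j; rewrite -/M.
  by have := Rabs_pos (a j); nra.
rewrite sumR_scal sumR_swap in rowwise.
rewrite (sumR_ext (g := fun j => Rabs (a j) * norm2sq (col j Delta))) in rowwise;
  last by move=> j; rewrite -sumR_scal.
rewrite sumR_scal in colwise; change (sumR (fun j => Rabs (a j))) with W in colwise.
have := Rmult_le_compat_l _ _ _ W0 colwise; nra.
Qed.

Lemma mulv_split k l (D D' : mat k l) a i :
  mulv D' a i = mulv D a i + mulv (mat_sub D' D) a i.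
Proof. by rewrite /mulv -sumR_add; apply: sumR_ext => j; rewrite /mat_sub; ring. Qed.

Lemma sqdist_expand k l (D D' : mat k l) x a :
  norm2sq (vsub x (mulv D' a)) =
  norm2sq (vsub x (mulv D a))
  - 2 * sumR (fun i => vsub x (mulv D a) i * mulv (mat_sub D' D) a i)
  + norm2sq (mulv (mat_sub D' D) a).
Proof.
rewrite /norm2sq /Rminus -sumR_scal -sumR_opp -!sumR_add.
by apply: sumR_ext => i; rewrite /vsub (mulv_split D); ring.
Qed.

Lemma cross_sum_frob k l n (Res : mat k n) (A : mat l n) (Delta : mat k l) :
  sumR (fun i => sumR (fun j => Res j i * mulv Delta (col i A) j)) =
  frob (mat_mul Res (trmx A)) Delta.
Proof.
rewrite /frob /mat_mul /mulv /trmx /col sumR_swap.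
apply: sumR_ext => j.
transitivity (sumR (fun i => sumR (fun t => Res j i * A t i * Delta j t))).
  by apply: sumR_ext => i; rewrite -sumR_scal; apply: sumR_ext => t; ring.
rewrite sumR_swap; apply: sumR_ext => t.
by rewrite Rmult_comm -sumR_scal; apply: sumR_ext => i; ring.
Qed.

Lemma invn_ge0 n : 0 <= / INR n.
Proof.
case: n => [|n]; first by rewrite Rinv_0; lra.
by apply: Rlt_le; apply: Rinv_0_lt_compat; apply: lt_0_INR; apply/ltP.
Qed.

Lemma invn_mul_le n e : 0 <= e -> / INR n * (INR n * e) <= e.
Proof.
case: n => [|n] e0; first by rewrite /=; lra.
have n0 : INR n.+1 <> 0 by apply: not_0_INR.
by rewrite -Rmult_assoc Rinv_l //; lra.
Qed.

Section SparseCodingCost.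

Variables (m d : nat) (g : vec d -> Rbar).
Hypothesis g_penalty : is_penalty g.

Lemma Lx_ge0 x (D : mat m d) a : Rbar_le (RF 0) (Lx g x D a).
Proof.
case: g_penalty => g_ge0 _; rewrite /Lx.
by have := g_ge0 a; have := norm2sq_ge0 (vsub x (mulv D a)); case: (g a) => //= r *; lra.
Qed.

(* The real value of f_x(D); it is f_x(D) itself by [fx_finite]. *)
Definition fx_val (x : vec m) (D : mat m d) : R :=
  if fx g x D is RF r then r else 0.

(* 0 <= f_x(D) <= L_x(D, a0) < +oo for any a0 with finite penalty. *)
Lemma fx_finite x D : fx g x D = RF (fx_val x D).
Proof.
have fx_ge0 : Rbar_le (RF 0) (fx g x D) by apply: inf_glb => v [a ->]; exact: Lx_ge0.
case: g_penalty => _ [a0 ga0_fin].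
have : Rbar_le (fx g x D) (Lx g x D a0) by apply: inf_lb; exists a0.
rewrite /fx_val /Lx; move: fx_ge0; case: (fx g x D) => //.
by move: ga0_fin; case: (g a0).
Qed.

Lemma fx_val_le x D a ga :
  g a = RF ga -> fx_val x D <= / 2 * norm2sq (vsub x (mulv D a)) + ga.
Proof.
move=> ga_fin; have : Rbar_le (fx g x D) (Lx g x D a) by apply: inf_lb; exists a.
by rewrite fx_finite /Lx ga_fin.
Qed.

Lemma Aeps_nonempty n eps (X : mat m n) (D : mat m d) :
  0 < eps -> exists A, in_Aeps g eps X D A.
Proof.
move=> eps0.
have code i : exists a : vec d,
    Rbar_le (Lx g (col i X) D a) (Rbar_plus (fx g (col i X) D) (RF eps)).
  have fx_le : Rbar_le (fx g (col i X) D) (RF (fx_val (col i X) D)).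
    by rewrite fx_finite /=; lra.
  have lt_eps : fx_val (col i X) D < fx_val (col i X) D + eps by lra.
  have [_ [[a ->] a_opt]] := inf_approx fx_le lt_eps.
  by exists a; rewrite fx_finite.
exists (fun j i => proj1_sig (constructive_indefinite_description _ (code i)) j).
by move=> i; exact: (proj2_sig (constructive_indefinite_description _ (code i))).
Qed.

Lemma Aeps_mono n eps eps' (X : mat m n) (D : mat m d) A :
  eps <= eps' -> in_Aeps g eps X D A -> in_Aeps g eps' X D A.
Proof.
move=> le_eps A_eps i; apply: Rbar_le_trans (A_eps i) _.
by rewrite fx_finite /=; lra.
Qed.

Lemma Aeps_column n eps (X : mat m n) (D : mat m d) A i :
  in_Aeps g eps X D A ->
  exists ga, g (col i A) = RF ga /\
    / 2 * norm2sq (vsub (col i X) (mulv D (col i A))) + ga <= fx_val (col i X) D + eps.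
Proof.
case: g_penalty => g_ge0 _ A_eps; have := A_eps i; rewrite fx_finite /Lx.
by have := g_ge0 (col i A); case: (g (col i A)) => //= r _ ?; exists r.
Qed.

Definition FX_val n (X : mat m n) (D : mat m d) : R :=
  / INR n * sumR (fun i => fx_val (col i X) D).

Lemma FX_finite n (X : mat m n) D : FX g X D = RF (FX_val X D).
Proof.
rewrite /FX /FX_val -scal_fin; congr Rbar_scal.
rewrite (eq_bigr (fun i => RF (fx_val (col i X) D))) => [|i _]; last exact: fx_finite.
by rewrite /sumR; symmetry; apply: (big_morph RF).
Qed.

Lemma sample_descent x (D D' : mat m d) a ga :
  g a = RF ga ->
  fx_val x D' <= / 2 * norm2sq (vsub x (mulv D a)) + ga
                 - sumR (fun i => vsub x (mulv D a) i * mulv (mat_sub D' D) a i)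
                 + / 2 * (norm1 a ^ 2 * norm_1to2 (mat_sub D' D) ^ 2).
Proof.
move=> ga_fin; have := fx_val_le x D' ga_fin; rewrite (sqdist_expand D).
by have := mulv_norm2sq_le (mat_sub D' D) a; lra.
Qed.

End SparseCodingCost.

Definition residual_gram m d n (X : mat m n) (D : mat m d) (A : mat d n) : mat m d :=
  mat_mul (mat_sub X (mat_mul D A)) (trmx A).

Definition quad_coef d n (C : R) (A : mat d n) : R :=
  C / (2 * INR n) * sumR (fun i => norm1 (col i A) ^ 2).

Section Descent.

Variables (m d n : nat) (g : vec d -> Rbar) (N : mat m d -> R) (C : R).
Variables (X : mat m n) (D : mat m d).
Hypothesis g_penalty : is_penalty g.
Hypothesis N_norm : is_norm N.
Hypothesis C_pos : 0 < C.
Hypothesis norm_1to2_le : forall Delta : mat m d, norm_1to2 Delta ^ 2 <= C * N Delta ^ 2.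

Lemma average_descent D' eps A :
  0 <= eps -> in_Aeps g eps X D A ->
  FX_val g X D' <= FX_val g X D + eps - / INR n * frob (residual_gram X D A) (mat_sub D' D)
                   + N (mat_sub D' D) ^ 2 * quad_coef C A.
Proof.
move=> eps0 A_eps; set Delta := mat_sub D' D; set u := N Delta.
have per_sample i : fx_val g (col i X) D' <= fx_val g (col i X) D + eps
    - sumR (fun j => mat_sub X (mat_mul D A) j i * mulv Delta (col i A) j)
    + / 2 * C * u ^ 2 * norm1 (col i A) ^ 2.
  have [ga [ga_fin ga_opt]] := Aeps_column g_penalty i A_eps.
  have := sample_descent g_penalty (col i X) D D' ga_fin.
  have := Rmult_le_compat_l _ _ _ (pow2_ge_0 (norm1 (col i A))) (norm_1to2_le Delta).
  change (sumR (fun j => mat_sub X (mat_mul D A) j i * mulv Delta (col i A) j))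
    with (sumR (fun j => vsub (col i X) (mulv D (col i A)) j * mulv Delta (col i A) j)).
  rewrite -/Delta -/u; lra.
have summed := sumR_le per_sample.
rewrite !sumR_add sumR_opp sumR_const sumR_scal cross_sum_frob in summed.
have := Rmult_le_compat_l _ _ _ (invn_ge0 n) summed.
have := invn_mul_le n eps0.
rewrite /FX_val /quad_coef /residual_gram /Rdiv Rinv_mult.
set c := / INR n; set F := frob _ _.
set Sold := sumR (fun i => fx_val g (col i X) D); set Q := sumR (fun i => norm1 (col i A) ^ 2).
have -> : c * (Sold + INR n * eps + - F + / 2 * C * u ^ 2 * Q)
    = c * Sold + c * (INR n * eps) - c * F + u ^ 2 * (C * (/ 2 * c) * Q) by ring.
lra.
Qed.

Lemma descent_at D' eps A l k :
  0 <= eps -> in_Aeps g eps X D A -> 0 < N (mat_sub D' D) ->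
  Rbar_le (Rbar_scal (/ INR n) (dual_norm N (residual_gram X D A))) (RF l) ->
  quad_coef C A <= k ->
  FX_val g X D' <= FX_val g X D + eps + N (mat_sub D' D) * l + N (mat_sub D' D) ^ 2 * k.
Proof.
move=> eps0 A_eps u_pos L_bound C_bound.
have := average_descent D' eps0 A_eps.
have := scaled_dual_bound N_norm (invn_ge0 n) u_pos L_bound.
have := Rmult_le_compat_l _ _ _ (pow2_ge_0 (N (mat_sub D' D))) C_bound.
lra.
Qed.

(* If L_X(D) <= l and C_X(D) <= k, then for every delta > 0 some single
   code A, eps-approximate with eps <= delta, has both coefficients within
   delta of l and k: take A in A_eps for eps below the two witnesses of the
   infima, since the sets A_eps shrink as eps decreases. *)
Lemma near_optimal_code l k delta :
  Rbar_le (LX g N X D) (RF l) -> Rbar_le (CX g C X D) (RF k) -> 0 < delta ->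
  exists eps A, 0 < eps <= delta /\ in_Aeps g eps X D A /\
    Rbar_le (Rbar_scal (/ INR n) (dual_norm N (residual_gram X D A))) (RF (l + delta)) /\
    quad_coef C A <= k + delta.
Proof.
move=> LX_le CX_le delta0.
have l_lt : l < l + delta by lra.
have k_lt : k < k + delta by lra.
have [_ [[eps1 [eps1_0 ->]] L_sup]] := inf_approx LX_le l_lt.
have [_ [[eps2 [eps2_0 ->]] C_sup]] := inf_approx CX_le k_lt.
set eps := Rmin delta (Rmin eps1 eps2).
have eps0 : 0 < eps by repeat apply: Rmin_pos.
have [A A_eps] := Aeps_nonempty g_penalty X D eps0.
have le_eps1 : eps <= eps1 by apply: Rle_trans (Rmin_r _ _) (Rmin_l _ _).
have le_eps2 : eps <= eps2 by apply: Rle_trans (Rmin_r _ _) (Rmin_r _ _).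
exists eps, A; split; [split; [done | exact: Rmin_l] | split; [done | split]].
- apply: Rbar_le_trans L_sup; apply: sup_ub; exists A.
  by split; [exact (Aeps_mono g_penalty le_eps1 A_eps) | reflexivity].
- have : Rbar_le (RF (quad_coef C A)) (RF (k + delta)).
    apply: Rbar_le_trans C_sup; apply: sup_ub; exists A.
    by split; [exact (Aeps_mono g_penalty le_eps2 A_eps) | reflexivity].
  by [].
Qed.

(* The theorem when D' <> D and both coefficients are finite: apply
   [descent_at] to near-optimal codes and let the margin tend to zero. *)
Lemma descent_finite D' l k :
  0 < N (mat_sub D' D) ->
  Rbar_le (LX g N X D) (RF l) -> Rbar_le (CX g C X D) (RF k) ->
  FX_val g X D' <= FX_val g X D + N (mat_sub D' D) * l + N (mat_sub D' D) ^ 2 * k.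
Proof.
move=> u_pos LX_le CX_le; set u := N _.
apply: le_epsilon => e e0.
set delta := e / (1 + u + u ^ 2).
have delta0 : 0 < delta by apply: Rdiv_lt_0_compat; nra.
have e_split : e = delta + u * delta + u ^ 2 * delta by rewrite /delta; field; nra.
have [eps [A [[eps0 eps_le] [A_eps [L_bound C_bound]]]]] :=
  near_optimal_code LX_le CX_le delta0.
have := descent_at (Rlt_le _ _ eps0) A_eps u_pos L_bound C_bound.
rewrite -/u; lra.
Qed.

(* Both coefficients are infima over eps of suprema of nonnegative
   quantities over the nonempty sets A_eps, hence nonnegative. *)
Lemma inf_sup_codes_ge0 (Q : mat d n -> Rbar) :
  (forall A, Rbar_le (RF 0) (Q A)) ->
  Rbar_le (RF 0) (Rbar_inf (fun v => exists eps, 0 < eps /\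
     v = Rbar_sup (fun w => exists A, in_Aeps g eps X D A /\ w = Q A))).
Proof.
move=> Q0; apply: inf_glb => v [eps [eps0 ->]].
have [A A_eps] := Aeps_nonempty g_penalty X D eps0.
by apply: Rbar_le_trans (Q0 A) (sup_ub _); exists A.
Qed.

Lemma LX_ge0 : Rbar_le (RF 0) (LX g N X D).
Proof.
apply: inf_sup_codes_ge0 => A.
exact: scal_ge0 (invn_ge0 n) (dual_ge0 _ N_norm).
Qed.

Lemma CX_ge0 : Rbar_le (RF 0) (CX g C X D).
Proof.
apply: inf_sup_codes_ge0 => A /=.
apply: Rmult_le_pos; last by apply: sumR_ge0 => i; exact: pow2_ge_0.
by rewrite /Rdiv Rinv_mult; have := invn_ge0 n; nra.
Qed.

End Descent.

Theorem mainTheorem3 (m d n : nat) (g : vec d -> Rbar) (N : mat m d -> R) (C : R)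
  (X : mat m n) (D : mat m d) :
  is_penalty g ->
  is_norm N ->
  0 < C ->
  (forall Delta : mat m d, norm_1to2 Delta ^ 2 <= C * N Delta ^ 2) ->
  (forall eps, 0 < eps -> exists A : mat d n, in_Aeps g eps X D A) /\
  (forall D' : mat m d,
     Rbar_le (FX g X D')
       (Rbar_plus (Rbar_plus (FX g X D) (Rbar_scal (N (mat_sub D' D)) (LX g N X D)))
                  (Rbar_scal (N (mat_sub D' D) ^ 2) (CX g C X D)))).
Proof.
move=> g_penalty N_norm C_pos norm_1to2_le; split => [eps eps0 | D'].
  exact: Aeps_nonempty.
rewrite !FX_finite //.
have [u0 | u_pos] : N (mat_sub D' D) = 0 \/ 0 < N (mat_sub D' D).
  by have := norm_ge0 (mat_sub D' D) N_norm; lra.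
-
  have u20 : N (mat_sub D' D) ^ 2 = 0 by rewrite u0; ring.
  by rewrite !scal0 // (norm_sub_eq0 N_norm u0) /=; lra.
- (* D' <> D: the bound is trivial unless both coefficients are finite. *)
  have u_ne0 : N (mat_sub D' D) <> 0 by lra.
  have u2_ne0 : N (mat_sub D' D) ^ 2 <> 0 by apply: pow_nonzero.
  have LX0 := LX_ge0 X D g_penalty N_norm; have CX0 := CX_ge0 X D g_penalty C_pos.
  case EL: (LX g N X D) LX0 => [l| |] l0; [| by rewrite scal_pinfty | by case: l0].
  case EC: (CX g C X D) CX0 => [k| |] k0; [| by rewrite scal_fin scal_pinfty | by case: k0].
  rewrite !scal_fin /=.
  by apply: (descent_finite g_penalty N_norm norm_1to2_le u_pos); rewrite ?EL ?EC /=; lra.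
Qed.
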